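(* Let $k\geq 2$ and $p\geq 0$ be integers and let $n=2(p+1)k+2$. Let \[ G=K_{1}\vee\big((pK_{2k})\cup K_{2k+1}\big), \] i.e. the graph obtained by taking the disjoint union of $p$ copies of $K_{2k}$ and one copy of $K_{2k+1}$ and adding one new vertex adjacent to all of its vertices. If $n\geq 6k+13$, then $q(G)<n+2k-2$.
   Context: All graphs are finite and simple. $K_r$ denotes the complete graph on $r$ vertices. For a graph $G$, the signless Laplacian is $Q(G)=D(G)+A(G)$, where $D(G)$ is the diagonal matrix of vertex degrees and $A(G)$ is the adjacency matrix; $q(G)$ denotes the largest eigenvalue of $Q(G)$. *)

From HB Require Import structures.
From mathcomp Require Import all_boot all_order all_algebra.
Set Implicit Arguments. Unset Strict Implicit. Unset Printing Implicit Defensive.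
Import Order.TTheory GRing.Theory Num.Theory.

Definition adj_mx (R : nzRingType) n (e : rel 'I_n) : 'M[R]_n :=
  \matrix_(i, j) ((e i j)%:R)%R.
Definition deg_mx (R : nzRingType) n (e : rel 'I_n) : 'M[R]_n :=
  diag_mx (\row_i ((#|[set j | e i j]|)%:R)%R).
Definition signless_laplacian (R : nzRingType) n (e : rel 'I_n) : 'M[R]_n :=
  (@deg_mx R n e + @adj_mx R n e)%R.

(* The graph K_1 v ((p K_{2k}) u K_{2k+1}) on n = 2(p+1)k+2 vertices:
   vertex 0 is the apex K_1; vertices 1..n-1 are split into consecutive
   blocks, blocks 0..p-1 of size 2k and block p of size 2k+1. *)
Definition nG (k p : nat) : nat := (2 * (p + 1) * k + 2)%N.
Definition blk (k p : nat) (v : nat) : nat := minn p (v.-1 %/ (2 * k)).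
Definition Gadj (k p : nat) : rel 'I_(nG k p) :=
  fun u v => (u != v) &&
    [|| (u : nat) == 0%N, (v : nat) == 0%N | blk k p u == blk k p v].
Arguments Gadj : clear implicits.
Arguments signless_laplacian : clear implicits.
Arguments adj_mx : clear implicits.
Arguments deg_mx : clear implicits.

From HB Require Import structures.
From mathcomp Require Import all_boot all_order all_algebra.
From mathcomp Require Import zify ring lra.
Import Order.TTheory GRing.Theory Num.Theory.
Set Implicit Arguments. Unset Strict Implicit. Unset Printing Implicit Defensive.

(* Let x be an eigenvector of Q(G) for an eigenvalue a, x0 its apex entry.
   Every non-apex vertex j lies in a clique block B (of size s <= 2k+1) and
   its eigen-equation reads (a - s + 1) x_j = x0 + sum_(i in B) x_i.  Solving
   this linear system on a clique (lemma clique_solution) gives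
   (a - 2s + 1) x_j = x0 as soon as a - s + 1 != 0.  Hence if a > 4k + 1, all
   x_j have the sign of x0, x0 != 0, and feeding x_j = x0 / (a - 2s + 1) into
   the apex equation (a - n + 1) x0 = sum_(j != apex) x_j yields
   (a - 4k - 1)(a - n + 1) <= n - 1 (lemma apex_bound). *)

Lemma card_ord_window n m l : (#|[set i : 'I_n | m <= i < m + l]| <= l)%N.
Proof.
rewrite cardE -(size_map val) -[X in (_ <= X)%N](size_iota m l).
apply: uniq_leq_size; first by rewrite map_inj_uniq ?enum_uniq //; exact: val_inj.
by move=> y /mapP[i]; rewrite mem_enum inE => hi ->; rewrite mem_iota.
Qed.

Section Graph.
Variables k p : nat.
Local Notation n := (nG k p).
Local Notation V := 'I_(nG k p).
Local Notation adj := (Gadj k p).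

Lemma nG_gt0 : (0 < n)%N. Proof. by rewrite /nG addn2. Qed.

Definition apex : V := Ordinal nG_gt0.

Lemma apexE (i : V) : (i == apex) = ((i : nat) == 0%N).
Proof. by rewrite -val_eqE. Qed.

Definition block (j : V) : {set V} :=
  [set i | (i != apex) && (blk k p i == blk k p j)].

Lemma Gadj_sym : symmetric adj.
Proof.
move=> u v; rewrite /Gadj (eq_sym v) (eq_sym (blk k p v)).
by case: (u == v); case: (nat_of_ord u == 0)%N; case: (nat_of_ord v == 0)%N; rewrite ?orbT.
Qed.

Lemma Gadj_apex j : adj apex j = (j != apex).
Proof. by rewrite /Gadj -!apexE eqxx andbT eq_sym. Qed.

Lemma Gadj_block i j : j != apex ->
  adj i j = (i == apex) || ((i \in block j) && (i != j)).
Proof.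
move=> j_ne; rewrite /Gadj inE -!apexE (negbTE j_ne) /=.
case: (eqVneq i apex) => [->|i_ne] /=; first by rewrite eq_sym j_ne.
by rewrite andbC.
Qed.

Lemma block_self j : j != apex -> j \in block j.
Proof. by move=> j_ne; rewrite inE j_ne eqxx. Qed.

Lemma block_eq i j : i \in block j -> block i = block j.
Proof. by rewrite inE => /andP[_ /eqP bij]; apply/setP => w; rewrite !inE bij. Qed.

(* The vertices of block j occupy a window of 2k+1 consecutive indices
   (the last block, of size 2k+1, is absorbed by the truncation minn p). *)
Lemma block_window j i : (0 < k)%N -> i \in block j ->
  (2 * k * blk k p j + 1 <= i < 2 * k * blk k p j + 1 + (2 * k + 1))%N.
Proof.
move=> k_gt0; rewrite inE apexE => /andP[i_ne0 /eqP <-].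
have i_lt := ltn_ord i; rewrite /nG in i_lt.
have i_eq : i = i.-1.+1 :> nat by rewrite prednK // lt0n.
rewrite /blk i_eq /= in i_lt *.
have d_gt0 : (0 < 2 * k)%N by rewrite muln_gt0.
have lo := leq_trunc_div i.-1 (2 * k); have hi := ltn_ceil i.-1 d_gt0.
move: (i.-1) (i.-1 %/ (2 * k)) i_lt lo hi => m q m_lt lo hi.
case: (leqP p q) => [p_le|q_lt].
- have := leq_mul p_le (leqnn (2 * k)); lia.
- lia.
Qed.

Lemma card_block j : (0 < k)%N -> (#|block j| <= 2 * k + 1)%N.
Proof.
move=> k_gt0; apply: leq_trans (card_ord_window n (2 * k * blk k p j + 1) _).
apply: subset_leq_card.
by apply/subsetP => i /(block_window k_gt0); rewrite inE.
Qed.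

Lemma sum_neighbours (M : nmodType) (F : V -> M) j : j != apex ->
  (\sum_(i | adj i j) F i + F j = F apex + \sum_(i in block j) F i)%R.
Proof.
move=> j_ne; rewrite (bigD1 apex) ?Gadj_apex //= (bigD1 j (block_self j_ne)) /=.
rewrite -addrA; congr (_ + _)%R; rewrite addrC; congr (_ + _)%R.
apply: eq_bigl => i.
change (adj i j && (i != apex) = (i \in block j) && (i != j)); rewrite Gadj_block //.
by case: (eqVneq i apex) => [->|i_ne]; rewrite ?inE ?eqxx ?andbT.
Qed.

Lemma deg_block j : j != apex -> #|[set i | adj j i]| = #|block j|.
Proof.
move=> j_ne; have -> : [set i | adj j i] = apex |: (block j :\ j).
  by apply/setP => i; rewrite inE Gadj_sym Gadj_block // in_setU1 in_setD1 andbC.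
by rewrite cardsU1 [in RHS](cardsD1 j) block_self // !inE eqxx andbF.
Qed.

Lemma deg_apex : #|[set i | adj apex i]| = n.-1.
Proof.
rewrite -[in RHS](card_ord n) -(cardsC1 apex); apply: eq_card => i.
by rewrite !inE Gadj_apex.
Qed.

End Graph.

Local Open Scope ring_scope.

Lemma eigen_gap_arith (R : realFieldType) (k n a : R) :
  2 <= k -> 6 * k + 13 <= n -> n + 2 * k - 2 <= a ->
  n - 1 < (a - 4 * k - 1) * (a - n + 1).
Proof. move=> *; nra. Qed.

(* If e z = y with e >= c > 0 then c (y z) <= y^2 (as y z = e z^2 >= 0). *)
Lemma le_sqr_of_mul_eq (R : realDomainType) (c e y z : R) :
  0 < c -> c <= e -> e * z = y -> c * (y * z) <= y ^+ 2.
Proof. by move=> c_gt0 c_le_e <-; nra. Qed.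

(* The eigen-equations on a clique S: if c x_j = y + sum_(i in S) x_i for all
   j in S and c != 0, then summing gives the total, and (c - |S|) x_j = y. *)
Lemma clique_solution (F : fieldType) (I : finType) (S : {set I}) (x : I -> F) (c y : F) :
  c != 0 -> (forall j, j \in S -> c * x j = y + \sum_(i in S) x i) ->
  forall j, j \in S -> (c - (#|S|)%:R) * x j = y.
Proof.
move=> c_neq0 eq_x j jS.
have sum_eq : c * \sum_(i in S) x i = (#|S|)%:R * (y + \sum_(i in S) x i).
  rewrite mulr_sumr; under eq_bigr => i iS do rewrite eq_x //.
  by rewrite sumr_const mulr_natl.
apply: (mulfI c_neq0).
by rewrite mulrCA eq_x // mulrBl mulrDr sum_eq; ring.
Qed.

Lemma signless_laplacian_col (R : comNzRingType) n (e : rel 'I_n) (v : 'rV[R]_n) j :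
  (v *m signless_laplacian R n e) 0 j
  = v 0 j * (#|[set i | e j i]|)%:R + \sum_(i | e i j) v 0 i.
Proof.
rewrite /signless_laplacian mulmxDr mxE /deg_mx mul_mx_diag !mxE.
congr (_ + _); rewrite [RHS]big_mkcond /=; apply: eq_bigr => i _.
by rewrite !mxE; case: (e i j); rewrite ?mulr1 ?mulr0.
Qed.

Section Eigenvector.
Variables (k p : nat) (R : realFieldType) (a : R) (v : 'rV[R]_(nG k p)).
Local Notation n := (nG k p).
Local Notation adj := (Gadj k p).
Local Notation apex := (@apex k p).
Local Notation block := (@block k p).
Hypothesis eigv : v *m signless_laplacian R n adj = a *: v.
Local Notation x := (v 0).

Lemma eigen_entry j : a * x j = x j * (#|[set i | adj j i]|)%:R + \sum_(i | adj i j) x i.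
Proof. by rewrite -signless_laplacian_col eigv mxE. Qed.

Lemma eigen_apex : a * x apex = (n%:R - 1) * x apex + \sum_(i | i != apex) x i.
Proof.
rewrite eigen_entry deg_apex -subn1 natrB ?nG_gt0 // mulrC; congr (_ + _).
by apply: eq_bigl => i; rewrite Gadj_sym Gadj_apex.
Qed.

Lemma eigen_block j : j != apex ->
  (a - (#|block j|)%:R + 1) * x j = x apex + \sum_(i in block j) x i.
Proof.
move=> j_ne; rewrite -sum_neighbours // mulrDl mulrBl eigen_entry deg_block //.
ring.
Qed.

Hypotheses (k_gt0 : (0 < k)%N) (a_large : 4 * k%:R + 1 < a).

Lemma card_blockR j : (#|block j|)%:R <= 2 * k%:R + 1 :> R.
Proof.
have -> : 2 * k%:R + 1 = (2 * k + 1)%N%:R :> R by rewrite natrD natrM.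
by rewrite ler_nat card_block.
Qed.

Lemma block_coefs j : [/\ 0 < a - 4 * k%:R - 1,
  a - 4 * k%:R - 1 <= a - 2 * (#|block j|)%:R + 1 & 0 < a - (#|block j|)%:R + 1].
Proof.
move: (card_blockR j) (ler0n R k) a_large.
set s := (#|block j|)%:R; set kk := k%:R => *.
by split; lra.
Qed.

Lemma eigen_block_solution j : j != apex ->
  (a - 2 * (#|block j|)%:R + 1) * x j = x apex.
Proof.
move=> j_ne; have [_ _ /lt0r_neq0 c_neq0] := block_coefs j.
have block_eqs i : i \in block j ->
    (a - (#|block j|)%:R + 1) * x i = x apex + \sum_(l in block j) x l.
  move=> ij; rewrite -(block_eq ij) eigen_block //.
  by move: ij; rewrite inE => /andP[].
rewrite -(clique_solution c_neq0 block_eqs (block_self j_ne)); congr (_ * _).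
ring.
Qed.

Lemma eigvec_apex_neq0 : v != 0 -> x apex != 0.
Proof.
apply: contra => /eqP x0; apply/eqP/rowP => j; rewrite mxE.
have [-> //|j_ne] := eqVneq j apex.
have [c0_gt0 c0_le _] := block_coefs j.
have /eqP := eigen_block_solution j_ne; rewrite x0 mulf_eq0 => /orP[|/eqP //].
by rewrite gt_eqF // (lt_le_trans c0_gt0).
Qed.

(* Substituting the block solutions into the apex equation. *)
Lemma apex_bound : v != 0 -> (a - 4 * k%:R - 1) * (a - n%:R + 1) <= n%:R - 1.
Proof.
move=> /eigvec_apex_neq0 x0_neq0; set c0 := a - 4 * k%:R - 1.
have nbr_sum : \sum_(i | i != apex) x i = (a - n%:R + 1) * x apex.
  by apply: (@addrI _ ((n%:R - 1) * x apex)); rewrite -eigen_apex; ring.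
have term_le i : i != apex -> c0 * (x apex * x i) <= x apex ^+ 2.
  move=> i_ne; have [c0_gt0 c0_le _] := block_coefs i.
  exact: le_sqr_of_mul_eq (eigen_block_solution i_ne).
have : c0 * (a - n%:R + 1) * x apex ^+ 2 <= (n%:R - 1) * x apex ^+ 2.
  have -> : c0 * (a - n%:R + 1) * x apex ^+ 2
           = c0 * (x apex * ((a - n%:R + 1) * x apex)) by ring.
  rewrite -nbr_sum !mulr_sumr; apply: le_trans (ler_sum _ term_le) _.
  by rewrite sumr_const cardC1 card_ord -[_ *+ _]mulr_natr -subn1 natrB ?nG_gt0 // mulrC.
have sq_gt0 : 0 < x apex ^+ 2 by rewrite lt0r sqrf_eq0 x0_neq0 sqr_ge0.
by rewrite ler_pM2r.
Qed.

End Eigenvector.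

Theorem corollary1 (R : rcfType) (k p : nat) :
  (2 <= k)%N -> (6 * k + 13 <= nG k p)%N ->
  forall a : R, eigenvalue (signless_laplacian R (nG k p) (Gadj k p)) a ->
  (a < (nG k p + 2 * k - 2)%:R)%R.
Proof.
move=> k_ge2 n_ge a /eigenvalueP[v eigv v_neq0]; rewrite ltNge; apply/negP => a_ge.
have kR : 2 <= k%:R :> R by rewrite ler_nat.
have nR : 6 * k%:R + 13 <= (nG k p)%:R :> R by rewrite -natrM -natrD ler_nat.
have aR : (nG k p)%:R + 2 * k%:R - 2 <= a.
  by rewrite -natrM -natrD -natrB //; lia.
have k_gt0 : (0 < k)%N by lia.
have a_large : 4 * k%:R + 1 < a by lra.
have := apex_bound eigv k_gt0 a_large v_neq0.
have := eigen_gap_arith kR nR aR.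
lra.
Qed.
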